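(* Let $A\in\mathbb{R}^{m\times n}$ and $x\in\mathbb{R}^n$. Let $L\subseteq\mathrm{supp}(x)$ and $S\subseteq[n]\setminus L$. If there is no circuit $C\subseteq\mathrm{supp}(x)$ with $C\cap S\ne\emptyset$, then \[\|x_S\|_\infty\le\kappa_A\min_{z\in\ker(A)+x}\|z_{[n]\setminus\operatorname{cl}(L)}\|_1.\]
   Context: An elementary vector of $\ker(A)$ is a nonzero $g\in\ker(A)$ with inclusion-minimal support among nonzero vectors of $\ker(A)$; a circuit is the support of an elementary vector (equivalently, a circuit of the linear matroid of the columns of $A$). The circuit imbalance is $\kappa_A=\max\{|g_i|/|g_j|: g \text{ elementary},\ i,j\in\mathrm{supp}(g)\}$. For $S\subseteq[n]$, $\operatorname{rk}(S)=\operatorname{rk}(A_S)$ where $A_S$ is the column submatrix, and $\operatorname{cl}(S)=\{i\in[n]:\operatorname{rk}(S\cup\{i\})=\operatorname{rk}(S)\}$. $x_S$ is the restriction of $x$ to coordinates in $S$. *)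

From HB Require Import structures.
From mathcomp Require Import all_boot all_order all_algebra.
From mathcomp Require Import classical_sets reals.
Set Implicit Arguments. Unset Strict Implicit. Unset Printing Implicit Defensive.
Import Order.TTheory GRing.Theory Num.Theory.
Local Open Scope ring_scope.

Section Defs.
Variables (R : realType) (m n : nat).
Implicit Types (A : 'M[R]_(m, n)) (g x : 'cV[R]_n) (S : {set 'I_n}).

Definition supp x : {set 'I_n} := [set i | x i 0 != 0].

Definition inker A g : Prop := A *m g = 0.

Definition elementary A g : Prop :=
  [/\ g != 0, inker A g &
      forall h, inker A h -> h != 0 -> supp h \subset supp g -> supp h = supp g].

Definition circuit A (C : {set 'I_n}) : Prop :=
  exists g, elementary A g /\ supp g = C.

(* column submatrix A_S, represented by zeroing the columns outside S
   (same rank as the genuine column submatrix) *)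
Definition colrestr A S : 'M[R]_(m, n) :=
  \matrix_(i, j) (if j \in S then A i j else 0).

Definition rk A S : nat := \rank (colrestr A S).

Definition cl A S : {set 'I_n} := [set i | rk A (i |: S) == rk A S].

(* circuit imbalance; the value 1 is included so that kappa_A = 1 when
   ker(A) has no elementary vectors (standard convention; otherwise the
   i = j ratio already contributes 1). *)
Definition kappa A : R :=
  sup [set r : R | r = 1 \/
        exists g i j, [/\ elementary A g, i \in supp g, j \in supp g &
                          r = `|g i 0| / `|g j 0|] ].

Definition norminf_on x S : R := \big[Num.max/0]_(i in S) `|x i 0|.
Definition norm1_on x S : R := \sum_(i in S) `|x i 0|.
End Defs.

From HB Require Import structures.
From mathcomp Require Import all_boot all_order all_algebra.
From mathcomp Require Import classical_sets reals boolp ring.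
Import Order.TTheory GRing.Theory Num.Theory.
Local Open Scope ring_scope.
Set Implicit Arguments. Unset Strict Implicit. Unset Printing Implicit Defensive.

(* Since the columns indexed by cl(L) lie in the span of those indexed by L,
   z can be changed by a kernel vector into z' that vanishes on cl(L) \ L and
   agrees with z outside cl(L).  Then y = x - z' lies in ker(A), and supp y is
   covered by supp x together with the set U of zeros of x outside cl(L), on
   which |y| = |z|.  A circuit of supp y through i in S cannot lie inside
   supp x, so it meets U.  Splitting y conformally into kernel vectors of
   smaller support until they are elementary, and bounding each elementary
   piece at i by kappa times its value at a point of U, yields
   |y_i| <= kappa * sum_U |z|.  Finally x_i = y_i + z'_i, where z'_i is 0 or
   z_i, and kappa >= 1. *)

Lemma ler_sum_subset (R : numDomainType) (I : finType) (P Q : {set I})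
    (F : I -> R) :
  (forall i, 0 <= F i) -> P \subset Q -> \sum_(i in P) F i <= \sum_(i in Q) F i.
Proof.
move=> F0 sPQ; rewrite [leRHS](big_setID P) /= (finset.setIidPr sPQ) lerDl.
exact: sumr_ge0.
Qed.

Lemma normr_convex_split (R : numDomainType) (a b c : R) :
  0 <= a -> 0 <= b -> a + b = 1 -> `|c| = `|a * c| + `|b * c|.
Proof.
move=> a0 b0 ab1.
by rewrite !normrM (ger0_norm a0) (ger0_norm b0) -mulrDl ab1 mul1r.
Qed.

Section Support.
Context {R : realType} {n : nat}.
Implicit Types (x y v : 'cV[R]_n).

Lemma in_supp x i : (i \in supp x) = (x i 0 != 0).
Proof. by rewrite inE. Qed.

Lemma supp_neq0 x : x != 0 -> exists i, i \in supp x.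
Proof.
apply: contraNP => nsupp; apply/eqP/matrixP => i j; rewrite ord1 mxE.
by apply/eqP/negbNE/negP => xi; apply: nsupp; exists i; rewrite in_supp.
Qed.

Lemma supp_mulc_proper (c : 'I_n -> R) y v k :
  (forall j, v j 0 = c j * y j 0) -> c k = 0 -> k \in supp y ->
  supp v \proper supp y.
Proof.
move=> vE ck0 ky; apply/properP; split.
  by apply/fintype.subsetP => j; rewrite !in_supp vE mulf_eq0 negb_or => /andP[].
by exists k; rewrite // in_supp vE ck0 mul0r eqxx.
Qed.

End Support.

Section Kernel.
Context {R : realType} {m n : nat} (A : 'M[R]_(m, n)).
Implicit Types (g h v w x y : 'cV[R]_n).

Lemma inkerZ (c : R) v : inker A v -> inker A (c *: v).
Proof. by rewrite /inker -scalemxAr => ->; rewrite scaler0. Qed.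

Lemma inkerB v w : inker A v -> inker A w -> inker A (v - w).
Proof. by rewrite /inker mulmxBr => -> ->; rewrite subrr. Qed.

Lemma not_elementary y : inker A y -> y != 0 -> ~ elementary A y ->
  exists2 h, inker A h /\ h != 0 & supp h \proper supp y.
Proof.
move=> ky y0; apply: contra_notP => noh; split=> // h kh h0 shy.
apply: contra_notP noh => neq; exists h => //.
by rewrite finset.properEneq shy andbT; apply/eqP.
Qed.

Lemma inker_conformal_split y h : inker A y -> inker A h -> h != 0 ->
  supp h \proper supp y ->
  exists v, exists w, [/\ inker A v, inker A w, supp v \proper supp y,
    supp w \proper supp y & forall j, `|y j 0| = `|v j 0| + `|w j 0|].
Proof.
move=> ky kh h0 /properP[shy [k ky_k hk]].
pose r j := h j 0 / y j 0.
have hr j : h j 0 = r j * y j 0.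
  have [yj0|yj] := eqVneq (y j 0) 0; last by rewrite divfK.
  rewrite yj0 mulr0; apply/eqP/negbNE/negP => hj.
  by move: (fintype.subsetP shy j); rewrite !in_supp yj0 eqxx => /(_ hj).
have rk0 : r k = 0.
  by move: hk; rewrite in_supp negbK /r => /eqP->; rewrite mul0r.
have r_out j : j \notin supp y -> r j = 0.
  by rewrite in_supp negbK /r => /eqP->; rewrite invr0 mulr0.
case: (@arg_maxP _ _ _ k (mem (supp y)) r ky_k) => jM yjM rM.
case: (@arg_minP _ _ _ k (mem (supp y)) r ky_k) => jm yjm rm.
set M := r jM in rM *; set mm := r jm in rm *.
have rmM j : mm <= r j /\ r j <= M.
  have [yj|yj] := boolP (j \in supp y); first by split; [apply: rm | apply: rM].
  by rewrite r_out // -rk0; split; [apply: rm | apply: rM].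
have d_gt0 : 0 < M - mm.
  rewrite subr_gt0 lt_neqAle (le_trans (rmM k).1 (rmM k).2) andbT.
  apply: contraNneq h0 => eM; apply/eqP/matrixP => j i.
  have rM' j' : r j' = M by apply/le_anti; rewrite (rmM j').2 -eM (rmM j').1.
  by rewrite ord1 mxE hr rM' -(rM' k) rk0 mul0r.
set d := M - mm in d_gt0.
(* Rescalings of the two points where the line through y in direction h
   leaves the closed orthant of y; they add up to y. *)
pose v := d^-1 *: (M *: y - h); pose w := d^-1 *: (h - mm *: y).
have vE j : v j 0 = (M - r j) / d * y j 0 by rewrite !mxE hr; ring.
have wE j : w j 0 = (r j - mm) / d * y j 0 by rewrite !mxE hr; ring.
exists v, w; split.
- by apply/inkerZ/inkerB => //; apply: inkerZ.
- by apply/inkerZ/inkerB => //; apply: inkerZ.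
- by apply: (supp_mulc_proper vE _ yjM); rewrite subrr mul0r.
- by apply: (supp_mulc_proper wE _ yjm); rewrite subrr mul0r.
move=> j; rewrite vE wE; have [mm_rj rj_M] := rmM j.
apply: normr_convex_split; rewrite ?divr_ge0 ?(ltW d_gt0) ?subr_ge0 //.
by rewrite -mulrDl addrA subrK mulfV ?gt_eqF.
Qed.

Lemma elementary_proportional g g' : elementary A g -> elementary A g' ->
  supp g = supp g' -> exists2 c : R, c != 0 & g' = c *: g.
Proof.
move=> [g0 kg min_g] [g'0 kg' _] sgg'.
have [j gj] := supp_neq0 g0.
have g'j : g' j 0 != 0 by rewrite -in_supp -sgg'.
move: gj; rewrite in_supp => gj.
pose c := g' j 0 / g j 0; exists c; first by rewrite mulf_neq0 ?invr_eq0.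
apply/eqP; rewrite -subr_eq0; apply/negPn/negP => d0.
have sd : supp (g' - c *: g) \subset supp g.
  apply/fintype.subsetP => l; rewrite !in_supp !mxE; apply: contraNN => /eqP gl.
  move/setP/(_ l): sgg'; rewrite !in_supp gl eqxx => /esym/negbFE/eqP->.
  by rewrite mulr0 subrr.
move/setP/(_ j): (min_g _ (inkerB kg' (inkerZ c kg)) d0 sd).
by rewrite !in_supp !mxE divfK // subrr eqxx gj.
Qed.

Lemma elementary_ratio_supp g g' i j : elementary A g -> elementary A g' ->
  supp g = supp g' -> `|g' i 0| / `|g' j 0| = `|g i 0| / `|g j 0|.
Proof.
move=> eg eg' sgg'; have [c c0 ->] := elementary_proportional eg eg' sgg'.
by rewrite !mxE !normrM invfM mulrACA mulfV ?mul1r ?normr_eq0.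
Qed.

Lemma elementary_ratio_bounded : exists b : R, forall g i j,
  elementary A g -> i \in supp g -> j \in supp g -> `|g i 0| / `|g j 0| <= b.
Proof.
(* The ratio only depends on supp g, so it takes finitely many values. *)
pose rep C := xget 0 (fun g => elementary A g /\ supp g = C).
pose F (p : {set 'I_n} * 'I_n * 'I_n) :=
  `|rep p.1.1 p.1.2 0| / `|rep p.1.1 p.2 0|.
exists (\sum_p F p) => g i j eg _ _.
have /(xgetPex 0) [er sr] : exists g0, elementary A g0 /\ supp g0 = supp g.
  by exists g.
rewrite (elementary_ratio_supp i j er eg sr) (bigD1 (supp g, i, j)) //= lerDl.
by apply: sumr_ge0 => p _; rewrite divr_ge0.
Qed.

Lemma le_kappa r : (r = 1 \/ exists g i j, [/\ elementary A g, i \in supp g,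
  j \in supp g & r = `|g i 0| / `|g j 0|]) -> r <= kappa A.
Proof.
move=> hr; apply: sup_upper_bound hr; split; first by exists 1; left.
have [b hb] := elementary_ratio_bounded.
exists (Num.max 1 b) => _ [->|[g [i [j [eg ig jg ->]]]]].
  by rewrite le_max lexx.
by rewrite le_max hb ?orbT.
Qed.

Lemma kappa_ge1 : 1 <= kappa A.
Proof. by apply: le_kappa; left. Qed.

Lemma elementary_entry_le_kappa g i j : elementary A g ->
  i \in supp g -> j \in supp g -> `|g i 0| <= kappa A * `|g j 0|.
Proof.
move=> eg ig jg; rewrite -ler_pdivrMr ?normr_gt0 -?in_supp //.
by apply: le_kappa; right; exists g, i, j.
Qed.

Lemma inker_entry_le_kappa y i (U : {set 'I_n}) : inker A y ->
  (forall C, circuit A C -> C \subset supp y -> i \in C ->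
     ~~ [disjoint C & U]) ->
  `|y i 0| <= kappa A * \sum_(j in U) `|y j 0|.
Proof.
have k0 : 0 <= kappa A := le_trans ler01 kappa_ge1.
have [N] := ubnP #|supp y|; elim: N y => // N IH y ltyN ky hC.
have [yi0|yi] := eqVneq (y i 0) 0.
  by rewrite yi0 normr0 mulr_ge0 ?sumr_ge0.
have y0 : y != 0 by apply: contraNneq yi => ->; rewrite mxE.
have iy : i \in supp y by rewrite in_supp.
have [ey|ney] := pselect (elementary A y).
  have := hC _ (ex_intro _ y (conj ey erefl)) (subxx _) iy.
  case/pred0Pn => u /andP[uy uU].
  apply: le_trans (elementary_entry_le_kappa ey iy uy) _.
  by rewrite ler_wpM2l // (bigD1 u) //= lerDl sumr_ge0.
have [h [kh h0] shy] := not_elementary ky y0 ney.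
have [v [w [kv kw svy swy yvw]]] := inker_conformal_split ky kh h0 shy.
have IHsub z : supp z \proper supp y -> inker A z ->
    `|z i 0| <= kappa A * \sum_(j in U) `|z j 0|.
  move=> szy kz; apply: IH (leq_trans (proper_card szy) (ltnSE ltyN)) kz _.
  by move=> C cC sCz; apply: hC cC (fintype.subset_trans sCz (proper_sub szy)).
rewrite yvw (eq_bigr _ (fun j _ => yvw j)) big_split mulrDr.
by rewrite lerD ?IHsub.
Qed.

Lemma inker_entry_le_kappa_cover x y i (U : {set 'I_n}) : inker A y ->
  supp y \subset supp x :|: U ->
  (forall C, circuit A C -> C \subset supp x -> i \notin C) ->
  `|y i 0| <= kappa A * \sum_(j in U) `|y j 0|.
Proof.
move=> ky syU hx; apply: inker_entry_le_kappa => // C cC sCy.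
apply: contraL => dCU; apply: hx cC _; apply/fintype.subsetP => l lC.
have := fintype.subsetP (fintype.subset_trans sCy syU) l lC.
by rewrite finset.in_setU (disjointFr dCU lC) orbF.
Qed.

End Kernel.

Section Closure.
Context {R : realType} {m n : nat} (A : 'M[R]_(m, n)) (L : {set 'I_n}).

Lemma subset_cl : L \subset cl A L.
Proof.
apply/fintype.subsetP => l lL; rewrite inE.
by rewrite (finset.setUidPr _) ?finset.sub1set.
Qed.

Lemma cl_colspan j : j \in cl A L ->
  exists2 q : 'cV[R]_n, supp q \subset L & A *m q = col j A.
Proof.
rewrite inE /rk => /eqP rkjL.
set B := colrestr A L; set B' := colrestr A (j |: L).
have sBB' : (B^T <= B'^T)%MS.
  apply/row_subP => l; have [lL|lL] := boolP (l \in L).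
    have -> : row l B^T = row l B'^T.
      by apply/rowP => i; rewrite !mxE finset.in_setU1 lL orbT.
    exact: row_sub.
  have -> : row l B^T = 0 by apply/rowP => i; rewrite !mxE (negbTE lL).
  exact: sub0mx.
have sB'B : (B'^T <= B^T)%MS.
  by rewrite -(mxrank_leqif_sup sBB').2 !mxrank_tr rkjL.
have /submxP [u hu] := submx_trans (row_sub j B'^T) sB'B.
exists (\col_l (if l \in L then u 0 l else 0)).
  apply/fintype.subsetP => l; rewrite in_supp mxE.
  by case: (l \in L); rewrite ?eqxx.
apply/matrixP => i k; rewrite ord1 !mxE.
have := congr1 (fun M : 'M[R]_(1, m) => M 0 i) hu.
rewrite !mxE finset.in_setU1 eqxx /= => ->.
apply: eq_bigr => l _; rewrite !mxE mulrC.
by case: (l \in L); rewrite ?mulr0 ?mul0r.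
Qed.

Lemma cl_exchange z : exists z', [/\ inker A (z - z'),
  forall l, l \notin cl A L -> z' l 0 = z l 0 &
  forall l, l \in cl A L :\: L -> z' l 0 = 0].
Proof.
suff /choice[q hq] : forall j, exists q : 'cV[R]_n,
    j \in cl A L -> supp q \subset L /\ A *m q = col j A.
  set D := cl A L :\: L.
  pose p := \sum_(j in D) z j 0 *: (delta_mx j 0 - q j).
  have pE l : l \notin L -> p l 0 = if l \in D then z l 0 else 0.
    move=> lL; rewrite summxE (eq_bigr (fun j => z j 0 * (l == j)%:R)).
      have [lD|lD] := boolP (l \in D).
        rewrite (bigD1 l) //= eqxx mulr1 big1 ?addr0 // => j /andP[_ /negbTE].
        by rewrite eq_sym => ->; rewrite mulr0.
      rewrite big1 // => j jD; rewrite (_ : (l == j) = false) ?mulr0 //.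
      by apply: contraNF lD => /eqP->.
      move=> j /setDP[jcl _]; rewrite !mxE eqxx andbT.
      have : l \notin supp (q j).
        by apply: contraNN lL; apply: (fintype.subsetP (hq j jcl).1).
      by rewrite in_supp negbK => /eqP->; rewrite subr0.
  exists (z - p); split.
  - rewrite /inker opprB addrC subrK mulmx_sumr big1 // => j /setDP[jcl _].
    by rewrite -scalemxAr mulmxBr -colE (hq j jcl).2 subrr scaler0.
  - move=> l lcl; have lL := contraNN (fintype.subsetP subset_cl l) lcl.
    rewrite !mxE pE //.
    by rewrite finset.in_setD (negbTE lcl) andbF subr0.
  - by move=> l lD; have /setDP[_ lL] := lD; rewrite !mxE pE // lD subrr.
move=> j; have [/cl_colspan[q sq Aq]|_] := boolP (j \in cl A L).
  by exists q.
by exists 0.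
Qed.

Lemma supp_subB_cl (x z' : 'cV[R]_n) : L \subset supp x ->
  (forall l, l \in cl A L :\: L -> z' l 0 = 0) ->
  supp (x - z') \subset supp x :|: [set l in ~: cl A L | x l 0 == 0].
Proof.
move=> sLx z'D; apply/fintype.subsetP => l.
rewrite finset.in_setU !in_supp inE finset.in_setC.
have [xl0 yl|//] := eqVneq (x l 0) 0; rewrite /= andbT; apply: contraL yl => lcl.
have lL : l \notin L.
  by apply/negP => /(fintype.subsetP sLx); rewrite in_supp xl0 eqxx.
by rewrite !mxE z'D ?finset.in_setD ?lL // xl0 subr0 eqxx.
Qed.

End Closure.

Unset Implicit Arguments.

Theorem lemma2p7 (R : realType) (m n : nat) (A : 'M[R]_(m, n)) (x : 'cV[R]_n)
    (L S : {set 'I_n}) :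
  L \subset supp x ->
  S \subset ~: L ->
  (forall C : {set 'I_n}, circuit A C -> C \subset supp x -> [disjoint C & S]) ->
  forall z : 'cV[R]_n, inker A (z - x) ->
    norminf_on x S <= kappa A * norm1_on z (~: cl A L).
Proof.
move=> hL hS hC z hz.
have k1 := kappa_ge1 A; have k0 : 0 <= kappa A := le_trans ler01 k1.
have [z' [kz z'_out z'_D]] := cl_exchange A L z.
set y := x - z'; set U := [set l in ~: cl A L | x l 0 == 0].
have ky : inker A y by have := inkerB kz hz; rewrite opprB addrC addrA subrK.
have sumU : \sum_(j in U) `|y j 0| = \sum_(j in U) `|z j 0|.
  apply: eq_bigr => l; rewrite inE finset.in_setC => /andP[lcl /eqP xl0].
  by rewrite !mxE xl0 sub0r normrN z'_out.
have UT : U \subset ~: cl A L.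
  by apply/fintype.subsetP => l; rewrite inE => /andP[].
apply: bigmax_le => [|i iS]; first by rewrite mulr_ge0 ?sumr_ge0.
have [xi0|xi] := eqVneq (x i 0) 0.
  by rewrite xi0 normr0 mulr_ge0 ?sumr_ge0.
have iC C : circuit A C -> C \subset supp x -> i \notin C.
  by move=> cC sCx; rewrite (disjointFl (hC C cC sCx) iS).
have := inker_entry_le_kappa_cover ky (supp_subB_cl hL z'_D) iC.
rewrite sumU /norm1_on => yi.
have -> : x i 0 = y i 0 + z' i 0 by rewrite !mxE subrK.
have [icl|icl] := boolP (i \in cl A L).
  have iL : i \notin L by move/(fintype.subsetP hS): iS; rewrite inE.
  rewrite z'_D ?finset.in_setD ?iL // addr0.
  by apply: le_trans yi _; rewrite ler_wpM2l // ler_sum_subset.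
rewrite z'_out //; apply: le_trans (ler_normD _ _) _.
apply: le_trans (lerD yi (ler_peMl (normr_ge0 _) k1)) _.
have iU : i \notin U by rewrite inE (negbTE xi) andbF.
rewrite addrC -mulrDr -big_setU1 //= ler_wpM2l // ler_sum_subset //.
by rewrite finset.subUset finset.sub1set finset.in_setC icl UT.
Qed.
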